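(* Let $S = R\cup B$ be a finite set of points in the plane in general position (no three collinear), colored red ($R$) and blue ($B$). If there are $a,b\in R$ and $c,d\in B$ such that the segments $\overline{ab}$ and $\overline{cd}$ intersect, then $S$ contains a balanced convex $4$-hole.
   Context: A $4$-hole of $S$ is a simple quadrilateral with vertices in $S$ and no point of $S$ in its interior; it is convex if the quadrilateral is convex, and balanced if it has exactly two red and two blue vertices. *)

From mathcomp Require Import all_boot all_order all_algebra.
Set Implicit Arguments. Unset Strict Implicit. Unset Printing Implicit Defensive.
Import Order.TTheory GRing.Theory Num.Theory.
Local Open Scope ring_scope.

Section Geom.
Variable R : realFieldType.
Notation pt := (R * R)%type.

(* twice the signed area of triangle pqr; > 0 iff p,q,r is a left turn *)
Definition orient (p q r : pt) : R :=
  (q.1 - p.1) * (r.2 - p.2) - (q.2 - p.2) * (r.1 - p.1).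

Definition general_position (S : seq pt) : Prop :=
  forall p q r, p \in S -> q \in S -> r \in S ->
    p <> q -> q <> r -> p <> r -> orient p q r != 0.

Definition on_segment (x a b : pt) : Prop :=
  exists t : R, 0 <= t <= 1 /\
    x = ((1 - t) * a.1 + t * b.1, (1 - t) * a.2 + t * b.2).

Definition segments_intersect (a b c d : pt) : Prop :=
  exists x, on_segment x a b /\ on_segment x c d.

Definition convex_quad (p1 p2 p3 p4 : pt) : Prop :=
  (0 < orient p1 p2 p3 /\ 0 < orient p2 p3 p4 /\
   0 < orient p3 p4 p1 /\ 0 < orient p4 p1 p2) \/
  (orient p1 p2 p3 < 0 /\ orient p2 p3 p4 < 0 /\
   orient p3 p4 p1 < 0 /\ orient p4 p1 p2 < 0).

Definition in_quad_interior (p1 p2 p3 p4 x : pt) : Prop :=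
  (0 < orient p1 p2 x /\ 0 < orient p2 p3 x /\
   0 < orient p3 p4 x /\ 0 < orient p4 p1 x) \/
  (orient p1 p2 x < 0 /\ orient p2 p3 x < 0 /\
   orient p3 p4 x < 0 /\ orient p4 p1 x < 0).

Definition convex_4hole (S : seq pt) (p1 p2 p3 p4 : pt) : Prop :=
  [/\ p1 \in S, p2 \in S, p3 \in S & p4 \in S] /\
  uniq [:: p1; p2; p3; p4] /\
  convex_quad p1 p2 p3 p4 /\
  (forall x, x \in S -> ~ in_quad_interior p1 p2 p3 p4 x).

Definition balanced (red blue : seq pt) (p1 p2 p3 p4 : pt) : Prop :=
  count (mem red) [:: p1; p2; p3; p4] = 2%N /\
  count (mem blue) [:: p1; p2; p3; p4] = 2%N.

End Geom.

From mathcomp Require Import all_boot all_order all_algebra.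
From mathcomp Require Import ring lra.
Import Order.TTheory GRing.Theory Num.Theory.
Local Open Scope ring_scope.
Set Implicit Arguments. Unset Strict Implicit.

(* Among the pairs of a red segment ab and a blue segment cd that cross, pick one for
   which the convex quadrilateral a c b d has minimal area; it is balanced and convex.
   It is also empty: by general position a blue point x inside it lies strictly on one
   side of ab, and replacing by x the blue endpoint on that side yields a crossing pair
   whose quadrilateral is a proper part of a c b d, hence has smaller area (red points
   are handled symmetrically with cd). *)

Section Orientation.
Variable R : realFieldType.
Implicit Types (a b c d x : R * R) (t u v : R).

Lemma orient_rot a b c : orient a b c = orient b c a.
Proof. by rewrite /orient; ring. Qed.

Lemma orient_swapl a b c : orient b a c = - orient a b c.
Proof. by rewrite /orient; ring. Qed.

Lemma orient_swapr a b c : orient a c b = - orient a b c.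
Proof. by rewrite /orient; ring. Qed.

Lemma orient_split a b c x :
  orient a b c = orient a b x + orient b c x + orient c a x.
Proof. by rewrite /orient; ring. Qed.

Lemma orient_diff a b c d :
  orient a b c - orient a b d = orient c d b - orient c d a.
Proof. by rewrite /orient; ring. Qed.

Lemma on_segment_orient c d x a b : on_segment x a b ->
  exists2 t, 0 <= t <= 1 & orient c d x = (1 - t) * orient c d a + t * orient c d b.
Proof. by case=> t [t01 ->]; exists t => //; rewrite /orient /=; ring. Qed.

Lemma on_segment_collinear x a b : on_segment x a b -> orient a b x = 0.
Proof. by case=> t [_ ->]; rewrite /orient /=; ring. Qed.

Lemma on_segment_degenerate x a : on_segment x a a -> x = a.
Proof. by case=> t [_ ->]; case: a => a1 a2 /=; congr pair; ring. Qed.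

Lemma convex_comb_eq0_mul_lt0 t u v : 0 <= t <= 1 -> u != 0 -> v != 0 ->
  (1 - t) * u + t * v = 0 -> u * v < 0.
Proof.
move=> /andP [t_ge0 t_le1] u_neq0 v_neq0 comb0.
have t_gt0 : 0 < t.
  rewrite lt_def t_ge0 andbT; apply: contraNneq u_neq0 => t0.
  by apply/eqP; move: comb0; rewrite t0; lra.
have t_lt1 : t < 1.
  rewrite lt_neqAle t_le1 andbT; apply: contraNneq v_neq0 => t1.
  by apply/eqP; move: comb0; rewrite t1; lra.
have uv : (1 - t) * (u * v) + t * v ^+ 2 = 0 by rewrite -(mul0r v) -comb0; ring.
have tv2 : 0 < t * v ^+ 2 by rewrite mulr_gt0 ?exprn_even_gt0.
nra.
Qed.

Definition crossing a b c d : bool :=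
  (orient a b c * orient a b d < 0) && (orient c d a * orient c d b < 0).

(* When [crossing a b c d], this is twice the area of the convex quadrilateral a c b d. *)
Definition quad_area a b c d : R := `|orient a b c - orient a b d|.

Lemma crossingC a b c d : crossing c d a b = crossing a b c d.
Proof. by rewrite /crossing andbC. Qed.

Lemma crossing_swapr a b c d : crossing a b d c = crossing a b c d.
Proof. by rewrite /crossing mulrC (orient_swapl c d a) (orient_swapl c d b) mulrNN. Qed.

Lemma quad_areaC a b c d : quad_area c d a b = quad_area a b c d.
Proof. by rewrite /quad_area (orient_diff a b c d) distrC. Qed.

Lemma quad_area_swapr a b c d : quad_area a b d c = quad_area a b c d.
Proof. exact: distrC. Qed.

Lemma crossing_neq a b c d : crossing a b c d -> (a != b) && (c != d).
Proof.
have neq p q r s : crossing p q r s -> p != q.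
  apply: contraTneq => ->; rewrite /crossing.
  have -> : orient q q r = 0 by rewrite /orient; ring.
  by rewrite mul0r ltxx.
by move=> cross; rewrite (neq _ _ _ _ cross) (neq c d a b) // crossingC.
Qed.

Lemma crossing_pos a b c d : 0 < orient a b d ->
  crossing a b c d = [&& orient a b c < 0, 0 < orient c d a & orient c d b < 0].
Proof.
move=> abd; rewrite /crossing (pmulr_llt0 _ abd).
apply/andP/and3P => [[abc cdab]|[abc cda cdb]]; last by rewrite pmulr_rlt0.
have := orient_diff a b c d; split=> //; nra.
Qed.

Lemma quad_area_pos a b c d : 0 < orient a b d -> orient a b c < 0 ->
  quad_area a b c d = orient a b d - orient a b c.
Proof.
by move=> abd abc; rewrite /quad_area distrC gtr0_norm // subr_gt0 (lt_trans abc).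
Qed.

Lemma crossing_convex_quad a b c d : 0 < orient a b d -> crossing a b c d ->
  convex_quad a c b d.
Proof.
move=> abd; rewrite crossing_pos // => /and3P [abc cda cdb]; left.
rewrite (orient_swapr a b c) (orient_swapr c d b) !oppr_gt0 abc cdb.
by rewrite -(orient_rot a b d) -(orient_rot c d a) abd cda.
Qed.

Lemma in_quad_interior_rot p1 p2 p3 p4 x :
  in_quad_interior p1 p2 p3 p4 x -> in_quad_interior p2 p3 p4 p1 x.
Proof. by rewrite /in_quad_interior; tauto. Qed.

Lemma crossing_shrink_cd a b c d x :
  0 < orient a b d -> crossing a b c d -> in_quad_interior a c b d x ->
  orient a b x != 0 ->
  (crossing a b x d /\ quad_area a b x d < quad_area a b c d) \/
  (crossing a b c x /\ quad_area a b c x < quad_area a b c d).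
Proof.
move=> abd; rewrite crossing_pos // => /and3P [abc cda cdb] xin abx.
have [acx cbx bdx dax] :
    [/\ 0 < orient a c x, 0 < orient c b x, 0 < orient b d x & 0 < orient d a x].
  case: xin => -[h1 [h2 [h3 h4]]]; first by [].
  (* the four triangles around x add up to the positive area of a c b d *)
  have := orient_split a c b x; have := orient_split a b d x.
  by rewrite (orient_swapl a b x) (orient_swapr a b c); lra.
rewrite (quad_area_pos abd abc).
case/orP: (lt_total abx) => [abx_neg|abx_pos]; [left|right].
- have abc_lt : orient a b c < orient a b x.
    have := orient_split a b c x.
    by rewrite (orient_swapl c b x) (orient_swapl a c x); lra.
  rewrite crossing_pos // (quad_area_pos abd abx_neg) abx_neg (orient_rot x d a) dax.
  rewrite (orient_rot x d b) (orient_swapl b d x) oppr_lt0 bdx.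
  by split=> //; lra.
- have abx_lt : orient a b x < orient a b d.
    by have := orient_split a b d x; lra.
  rewrite crossing_pos // (quad_area_pos abx_pos abc) abc -(orient_rot a c x) acx.
  rewrite (orient_swapr c b x) oppr_lt0 cbx.
  by split=> //; lra.
Qed.

Lemma crossing_shrink_ab a b c d x :
  0 < orient a b d -> crossing a b c d -> in_quad_interior a c b d x ->
  orient c d x != 0 ->
  (crossing x a c d /\ quad_area x a c d < quad_area a b c d) \/
  (crossing b x c d /\ quad_area b x c d < quad_area a b c d).
Proof.
move=> abd cross xin cdx.
have cda : 0 < orient c d a by move: cross; rewrite crossing_pos // => /and3P[].
have cross' : crossing c d b a by rewrite crossing_swapr crossingC.
have := crossing_shrink_cd cda cross' (in_quad_interior_rot xin) cdx.
by rewrite (quad_area_swapr c d a b) !(quad_areaC _ _ c d) !(crossingC _ _ c d).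
Qed.

End Orientation.

Section ColoredPoints.
Variables (R : realFieldType) (red blue : seq (R * R)).
Hypothesis red_blue_disjoint : forall p, p \in red -> p \notin blue.
Hypothesis general_pos : general_position (red ++ blue).

Lemma blue_notin_red p : p \in blue -> p \notin red.
Proof. by apply: contraTN => /red_blue_disjoint. Qed.

Lemma red_blue_neq p q : p \in red -> q \in blue -> p != q.
Proof. by move=> pr qb; apply: contraTneq qb => <-; apply: red_blue_disjoint. Qed.

Lemma orient_red_red_blue a b x :
  a \in red -> b \in red -> x \in blue -> a != b -> orient a b x != 0.
Proof.
move=> ar br xb ab; apply: general_pos; rewrite ?mem_cat ?ar ?br ?xb ?orbT //.
- exact/eqP.
- exact/eqP/(red_blue_neq br xb).
- exact/eqP/(red_blue_neq ar xb).
Qed.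

Lemma orient_blue_blue_red c d x :
  c \in blue -> d \in blue -> x \in red -> c != d -> orient c d x != 0.
Proof.
move=> cb db xr cd; apply: general_pos; rewrite ?mem_cat ?cb ?db ?xr ?orbT //.
- exact/eqP.
- by apply/eqP; rewrite eq_sym red_blue_neq.
- by apply/eqP; rewrite eq_sym red_blue_neq.
Qed.

Definition bichromatic_crossing a b c d :=
  [&& a \in red, b \in red, c \in blue, d \in blue & crossing a b c d].

Lemma segments_intersect_crossing a b c d :
  a \in red -> b \in red -> c \in blue -> d \in blue ->
  segments_intersect a b c d -> bichromatic_crossing a b c d.
Proof.
move=> ar br cb db [x [xab xcd]].
have ab : a != b.
  apply/eqP=> eab; move: xab; rewrite -eab => /on_segment_degenerate xa.
  have [ecd|cd] := eqVneq c d.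
    move: xcd; rewrite -ecd xa => /on_segment_degenerate ac.
    by move: (red_blue_neq ar cb); rewrite ac eqxx.
  move: (orient_blue_blue_red cb db ar cd).
  by rewrite -xa (on_segment_collinear xcd) eqxx.
have cd : c != d.
  apply/eqP=> ecd; move: xcd; rewrite -ecd => /on_segment_degenerate xc.
  move: (orient_red_red_blue ar br cb ab).
  by rewrite -xc (on_segment_collinear xab) eqxx.
rewrite /bichromatic_crossing ar br cb db /crossing /=; apply/andP; split.
- have [s s01 abx] := on_segment_orient a b xcd.
  apply: (convex_comb_eq0_mul_lt0 s01 (orient_red_red_blue ar br cb ab)
                                      (orient_red_red_blue ar br db ab)).
  by rewrite -abx (on_segment_collinear xab).
- have [t t01 cdx] := on_segment_orient c d xab.
  apply: (convex_comb_eq0_mul_lt0 t01 (orient_blue_blue_red cb db ar cd)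
                                      (orient_blue_blue_red cb db br cd)).
  by rewrite -cdx (on_segment_collinear xcd).
Qed.

Lemma exists_min_area_crossing a b c d : bichromatic_crossing a b c d ->
  exists a b c d, [/\ bichromatic_crossing a b c d, 0 < orient a b d &
    forall a' b' c' d', bichromatic_crossing a' b' c' d' ->
      quad_area a b c d <= quad_area a' b' c' d'].
Proof.
case/and5P=> ar br cb db cross.
pose Q := (seq_sub red * seq_sub red * seq_sub blue * seq_sub blue)%type.
pose pts (q : Q) := (ssval q.1.1.1, ssval q.1.1.2, ssval q.1.2, ssval q.2).
pose P := [pred q : Q | let: (a, b, c, d) := pts q in crossing a b c d].
pose F (q : Q) := let: (a, b, c, d) := pts q in quad_area a b c d.
have P0 : P (SeqSub ar, SeqSub br, SeqSub cb, SeqSub db) by [].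
case: (arg_minP F P0) => -[[[[a0 a0r] [b0 b0r]] [c0 c0r]] [d0 d0r]] /= cross0 min0.
have min a' b' c' d' : bichromatic_crossing a' b' c' d' ->
    quad_area a0 b0 c0 d0 <= quad_area a' b' c' d'.
  case/and5P=> a'r b'r c'b d'b cross'.
  exact: (min0 (SeqSub a'r, SeqSub b'r, SeqSub c'b, SeqSub d'b)).
have /lt_total/orP[abd_neg|abd_pos] : orient a0 b0 d0 != 0.
  by move: cross0 => /andP[]; rewrite mulr_lt0 => /and3P[].
- exists a0, b0, d0, c0; split.
  + by rewrite /bichromatic_crossing crossing_swapr a0r b0r c0r d0r.
  + by move: cross0 => /andP[]; rewrite (nmulr_llt0 _ abd_neg).
  + by move=> a' b' c' d' /min; rewrite quad_area_swapr.
- by exists a0, b0, c0, d0; split; rewrite // /bichromatic_crossing a0r b0r c0r d0r.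
Qed.

Lemma bichromatic_crossing_shrink a b c d x :
  0 < orient a b d -> bichromatic_crossing a b c d ->
  x \in red ++ blue -> in_quad_interior a c b d x ->
  exists a' b' c' d',
    bichromatic_crossing a' b' c' d' /\ quad_area a' b' c' d' < quad_area a b c d.
Proof.
move=> abd /and5P[ar br cb db cross]; have /andP[ab cd] := crossing_neq cross.
rewrite mem_cat => /orP[xr|xb] xin.
- have [] := crossing_shrink_ab abd cross xin (orient_blue_blue_red cb db xr cd).
    by case=> cross'' lt; exists x, a, c, d; rewrite /bichromatic_crossing xr ar cb db.
  by case=> cross'' lt; exists b, x, c, d; rewrite /bichromatic_crossing br xr cb db.
- have [] := crossing_shrink_cd abd cross xin (orient_red_red_blue ar br xb ab).
    by case=> cross'' lt; exists a, b, x, d; rewrite /bichromatic_crossing ar br xb db.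
  by case=> cross'' lt; exists a, b, c, x; rewrite /bichromatic_crossing ar br cb xb.
Qed.

Lemma bichromatic_crossing_4hole a b c d :
  0 < orient a b d -> bichromatic_crossing a b c d ->
  (forall x, x \in red ++ blue -> ~ in_quad_interior a c b d x) ->
  convex_4hole (red ++ blue) a c b d /\ balanced red blue a c b d.
Proof.
move=> abd /and5P[ar br cb db cross] empty.
split; last first.
  rewrite /balanced /= ar br cb db.
  rewrite (negbTE (red_blue_disjoint ar)) (negbTE (red_blue_disjoint br)).
  by rewrite (negbTE (blue_notin_red cb)) (negbTE (blue_notin_red db)).
split; first by rewrite !mem_cat ar br cb db !orbT.
split; last by split; [apply: crossing_convex_quad | apply: empty].
have /andP[ab cd] := crossing_neq cross.
rewrite /= !inE !negb_or ab cd (eq_sym c b) !(red_blue_neq ar, red_blue_neq br) //=.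
Qed.

End ColoredPoints.

Theorem lemma4 (R : realFieldType) (red blue : seq (R * R))
    (hdisj : forall p, p \in red -> p \notin blue)
    (hgp : general_position (red ++ blue))
    (a b c d : R * R)
    (ha : a \in red) (hb : b \in red) (hc : c \in blue) (hd : d \in blue)
    (hcross : segments_intersect a b c d) :
  exists p1 p2 p3 p4 : R * R,
    convex_4hole (red ++ blue) p1 p2 p3 p4 /\ balanced red blue p1 p2 p3 p4.
Proof.
have [a' [b' [c' [d' [cross abd min]]]]] :=
  exists_min_area_crossing (segments_intersect_crossing hdisj hgp ha hb hc hd hcross).
exists a', c', b', d'; apply: (bichromatic_crossing_4hole hdisj abd cross) => x xS xin.
have [a'' [b'' [c'' [d'' [cross'' smaller]]]]] :=
  bichromatic_crossing_shrink hdisj hgp abd cross xS xin.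
by move: (min _ _ _ _ cross''); rewrite leNgt smaller.
Qed.
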